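(* Let $\mathbb{F}$ be a field of characteristic $2$, $V$ a finite-dimensional $\mathbb{F}$-vector space and $b$ a non-degenerate symmetric bilinear form on $V$ with attached quadratic form $Q: x\mapsto b(x,x)$. Assume that $\operatorname{Ker} Q$ is totally $b$-singular. Then $\operatorname{Ker} Q$ is stable under every nilpotent $b$-symmetric endomorphism of $V$.
   Context: $\operatorname{Ker} Q = \{x\in V : Q(x)=0\}$, a linear subspace in characteristic $2$. A subspace $X$ is totally $b$-singular if $b(x,y)=0$ for all $x,y\in X$. An endomorphism $u$ is $b$-symmetric if $(x,y)\mapsto b(x,u(y))$ is symmetric. *)

From HB Require Import structures.
From mathcomp Require Import all_boot all_order all_algebra.
From mathcomp Require Export sesquilinear.
Set Implicit Arguments.
Unset Strict Implicit.
Unset Printing Implicit Defensive.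
Import GRing.Theory.
Local Open Scope ring_scope.

Section Defs.
Variables (F : fieldType) (V : vectType F).

Definition quadf (b : V -> V -> F) (x : V) : F := b x x.

Definition kerQ (b : V -> V -> F) : pred V := [pred x | quadf b x == 0].

Definition totally_singular (b : V -> V -> F) (X : pred V) : Prop :=
  {in X &, forall x y, b x y = 0}.

Definition b_symmetric (b : V -> V -> F) (u : 'End(V)) : Prop :=
  forall x y, b x (u y) = b y (u x).

Definition nilpotent_end (u : 'End(V)) : Prop :=
  exists k : nat, forall x, iter k u x = 0.

Definition stable_under (u : 'End(V)) (X : pred V) : Prop :=
  {in X, forall x, u x \in X}.
End Defs.

From HB Require Import structures.
From mathcomp Require Import all_boot all_order all_algebra.
From mathcomp Require Import sesquilinear zify.
Set Implicit Arguments.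
Unset Strict Implicit.
Unset Printing Implicit Defensive.
Import GRing.Theory.
Local Open Scope ring_scope.

(* For x in Ker Q and m >= 1, b-symmetry of u gives Q(u^m x) = b(x, u^(2m) x).
   So if u^(2m) x lies in Ker Q, total singularity forces u^m x into Ker Q too.
   Since u^k x = 0 lies in Ker Q for large k, a descending induction on m
   reaches m = 1. *)

Section SymmetricEndomorphism.
Variables (F : fieldType) (V : vectType F) (b : {symmetric V}) (u : 'End(V)).
Hypothesis u_sym : b_symmetric b u.

Lemma symmetric_formC x y : b x y = b y x.
Proof. by rewrite (hermC b) /= expr0 mul1r. Qed.

Lemma b_symmetric_iter m x y : b (iter m u x) y = b x (iter m u y).
Proof.
elim: m x y => [//|m IHm] x y /=.
by rewrite symmetric_formC u_sym IHm -iterSr.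
Qed.

Lemma quadf_iter m x : quadf b (iter m u x) = b x (iter (m + m) u x).
Proof. by rewrite /quadf b_symmetric_iter iterD. Qed.

Lemma kerQ_iter_half m x :
  totally_singular b (kerQ b) -> x \in kerQ b ->
  iter (m + m) u x \in kerQ b -> iter m u x \in kerQ b.
Proof. by move=> Ksing Qx Qx2m; rewrite inE quadf_iter Ksing. Qed.

Variable N : nat.
Hypothesis u_nil : forall x, iter N u x = 0.

Lemma iter_nil_ge m x : (N <= m)%N -> iter m u x = 0.
Proof. by move=> leNm; rewrite -(subnK leNm) iterD u_nil iter_fix ?linear0. Qed.

Lemma kerQ_iter_stable m :
  totally_singular b (kerQ b) -> (0 < m)%N ->
  {in kerQ b, forall x, iter m u x \in kerQ b}.
Proof.
move=> Ksing m_gt0 x Qx.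
have [d le_d] : exists d, (N - m <= d)%N by exists (N - m)%N.
elim: d m le_d m_gt0 => [|d IHd] m le_d m_gt0.
  by move: le_d; rewrite leqn0 subn_eq0 => /iter_nil_ge ->; rewrite inE /quadf linear0.
apply: kerQ_iter_half => //; apply: IHd; lia.
Qed.

End SymmetricEndomorphism.

Theorem lemma5p1 (F : fieldType) (V : vectType F) (b : {symmetric V}) :
  2 \in [pchar F] ->
  nondegenerate b ->
  totally_singular b (kerQ b) ->
  forall u : 'End(V), nilpotent_end u -> b_symmetric b u ->
    stable_under u (kerQ b).
Proof.
move=> _ _ Ksing u [N u_nil] u_sym.
exact: (kerQ_iter_stable u_sym u_nil Ksing (ltn0Sn 0)).
Qed.
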